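(* Let $T$ be a complete first-order theory with monster model $\mathcal{U}$, $A\subseteq\mathcal{U}$ small, $\mu\in\mathfrak{M}_x(\mathcal{U})$, and $f:\mathcal{U}^x\to\mathcal{U}^y$ an $A$-definable function. Then $\mu\geq_{\mathbb{E},A} f(\mu)$.
   Context: For $B\subseteq\mathcal{U}$, $\mathcal{L}_x(B)$ is the Boolean algebra of formulas in $x$ with parameters from $B$ modulo $T$, identified with a subalgebra of $\mathcal{L}_{xy}(B)$ via $\varphi(x)\mapsto\varphi(x)\wedge y=y$; $\mathfrak{M}_x(B)$ is the set of finitely additive probability measures (Keisler measures) on $\mathcal{L}_x(B)$. For $\omega\in\mathfrak{M}_{xy}(B)$, $\pi_x(\omega)(\varphi(x))=\omega(\varphi(x)\wedge y=y)$ (similarly $\pi_y$); $\omega|_C$ is restriction to $\mathcal{L}_{xy}(C)$. The push-forward $f(\mu)\in\mathfrak{M}_y(\mathcal{U})$ is $f(\mu)(\psi(y))=\mu(\psi(f(x)))$. For $\mu\in\mathfrak{M}_x(\mathcal{U})$, $\nu\in\mathfrak{M}_y(\mathcal{U})$ ($x,y$ disjoint) and small $A$: $\mu\geq_{\mathbb{E},A}\nu$ means there is $\lambda\in\mathfrak{M}_{xy}(A)$ with $\pi_x(\lambda)=\mu|_A$ such that every $\omega\in\mathfrak{M}_{xy}(\mathcal{U})$ with $\omega|_A=\lambda$ and $\pi_x(\omega)=\mu$ satisfies $\pi_y(\omega)=\nu$. *)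

From Stdlib Require Import Reals List.
From Stdlib Require Fin.
Import ListNotations.
Open Scope R_scope.

Record signature := {
  Fsym : Type;
  Rsym : Type;
  far : Fsym -> nat;
  rar : Rsym -> nat
}.

Record structure (L : signature) := {
  dom :> Type;
  funs : forall f : Fsym L, (Fin.t (far L f) -> dom) -> dom;
  rels : forall r : Rsym L, (Fin.t (rar L r) -> dom) -> Prop
}.
Arguments funs {L} _ _ _.
Arguments rels {L} _ _ _.

Section Syntax.
Variable L : signature.
Variable P : Type. (* type of parameters (elements of the model) *)

Inductive term :=
| Var : nat -> term
| Par : P -> term
| App : forall f : Fsym L, (Fin.t (far L f) -> term) -> term.

Inductive formula :=
| Top : formula
| Bot : formula
| Eq : term -> term -> formula
| Rel : forall r : Rsym L, (Fin.t (rar L r) -> term) -> formula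
| Not : formula -> formula
| And : formula -> formula -> formula
| Or : formula -> formula -> formula
| Ex : nat -> formula -> formula.

Fixpoint term_vars_in (V : nat -> Prop) (t : term) : Prop :=
  match t with
  | Var v => V v
  | Par _ => True
  | App f args => forall i, term_vars_in V (args i)
  end.

Fixpoint term_params_in (B : P -> Prop) (t : term) : Prop :=
  match t with
  | Var _ => True
  | Par a => B a
  | App f args => forall i, term_params_in B (args i)
  end.

Fixpoint vars_in (V : nat -> Prop) (phi : formula) : Prop :=
  match phi with
  | Top | Bot => True
  | Eq t u => term_vars_in V t /\ term_vars_in V u
  | Rel r args => forall i, term_vars_in V (args i)
  | Not p => vars_in V p
  | And p q | Or p q => vars_in V p /\ vars_in V q
  | Ex v p => vars_in (fun w => w = v \/ V w) p
  end.

Fixpoint params_in (B : P -> Prop) (phi : formula) : Prop :=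
  match phi with
  | Top | Bot => True
  | Eq t u => term_params_in B t /\ term_params_in B u
  | Rel r args => forall i, term_params_in B (args i)
  | Not p => params_in B p
  | And p q | Or p q => params_in B p /\ params_in B q
  | Ex _ p => params_in B p
  end.

(* x = x for every variable of the tuple y, i.e. the formula "y = y" *)
Definition eqs (y : list nat) : formula :=
  fold_right (fun v phi => And (Eq (Var v) (Var v)) phi) Top y.

Definition exs (y : list nat) (phi : formula) : formula :=
  fold_right Ex phi y.

End Syntax.

Arguments Var {L P} _.
Arguments Par {L P} _.
Arguments App {L P} _ _.
Arguments Top {L P}.
Arguments Bot {L P}.
Arguments Eq {L P} _ _.
Arguments Rel {L P} _ _.
Arguments Not {L P} _.
Arguments And {L P} _ _.
Arguments Or {L P} _ _.
Arguments Ex {L P} _ _.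
Arguments vars_in {L P} _ _.
Arguments params_in {L P} _ _.
Arguments eqs {L P} _.
Arguments exs {L P} _ _.

Section Semantics.
Variable L : signature.
Variable M : structure L.

Definition upd (s : nat -> M) (v : nat) (a : M) : nat -> M :=
  fun w => if Nat.eqb w v then a else s w.

Fixpoint eval (s : nat -> M) (t : term L M) : M :=
  match t with
  | Var v => s v
  | Par a => a
  | App f args => funs M f (fun i => eval s (args i))
  end.

Fixpoint sat (s : nat -> M) (phi : formula L M) : Prop :=
  match phi with
  | Top => True
  | Bot => False
  | Eq t u => eval s t = eval s u
  | Rel r args => rels M r (fun i => eval s (args i))
  | Not p => ~ sat s p
  | And p q => sat s p /\ sat s q
  | Or p q => sat s p \/ sat s q
  | Ex v p => exists a : M, sat (upd s v a) p
  end.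

Definition inL (x : list nat) (B : M -> Prop) (phi : formula L M) : Prop :=
  vars_in (fun v => In v x) phi /\ params_in B phi.

(* equivalence modulo T = Th(U, U): equivalence in the model U *)
Definition equivU (phi psi : formula L M) : Prop :=
  forall s, sat s phi <-> sat s psi.

(* mu (a function on formulas) is a Keisler measure on L_x(B), i.e.
   a finitely additive probability measure on the Lindenbaum algebra. *)
Definition keisler (x : list nat) (B : M -> Prop)
    (mu : formula L M -> R) : Prop :=
  (forall phi psi, inL x B phi -> inL x B psi -> equivU phi psi ->
      mu phi = mu psi) /\
  (forall phi, inL x B phi -> 0 <= mu phi) /\
  mu Top = 1 /\
  (forall phi psi, inL x B phi -> inL x B psi ->
      (forall s, ~ (sat s phi /\ sat s psi)) ->
      mu (Or phi psi) = mu phi + mu psi).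

Definition allU : M -> Prop := fun _ => True.

Definition pi_x (y : list nat) (omega : formula L M -> R) (phi : formula L M) : R :=
  omega (And phi (eqs y)).

Definition geE (x y : list nat) (A : M -> Prop)
    (mu nu : formula L M -> R) : Prop :=
  exists lam : formula L M -> R,
    keisler (x ++ y) A lam /\
    (forall phi, inL x A phi -> pi_x y lam phi = mu phi) /\
    forall omega : formula L M -> R,
      keisler (x ++ y) allU omega ->
      (forall chi, inL (x ++ y) A chi -> omega chi = lam chi) ->
      (forall phi, inL x allU phi -> pi_x y omega phi = mu phi) ->
      forall psi, inL y allU psi -> pi_x x omega psi = nu psi.

(* theta(x,y) (with parameters in A) defines the function f : U^x -> U^y,
   tuples being represented as lists of the values of the variables. *)
Definition defines_fun (x y : list nat) (A : M -> Prop)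
    (f : list M -> list M) (theta : formula L M) : Prop :=
  inL (x ++ y) A theta /\
  (forall a : list M, length a = length x -> length (f a) = length y) /\
  forall s : nat -> M, sat s theta <-> map s y = f (map s x).

(* push-forward: f(mu)(psi(y)) = mu(psi(f(x))), where psi(f(x)) is
   the formula  exists y (theta(x,y) /\ psi(y)). *)
Definition pushforward (y : list nat) (theta : formula L M)
    (mu : formula L M -> R) (psi : formula L M) : R :=
  mu (exs y (And theta psi)).

End Semantics.

Arguments inL {L M} _ _ _.
Arguments keisler {L M} _ _ _.
Arguments allU {L M} _.
Arguments geE {L M} _ _ _ _ _.
Arguments defines_fun {L M} _ _ _ _ _.
Arguments pushforward {L M} _ _ _ _.

(** The graph of [f] is defined by [theta], so [lambda(chi(x,y)) := mu(exists y,
    theta(x,y) /\ chi(x,y))] (i.e. [pushforward y theta mu] read on formulas in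
    [x ++ y]) is a Keisler measure over [A] with x-marginal [mu] and
    [lambda(theta) = 1].  Any global extension [omega] of [lambda] therefore
    also gives [theta] measure 1, i.e. concentrates on the graph of [f]; on the
    graph [psi(y)] and [psi(f(x))] are equivalent, so the y-marginal of [omega]
    is the push-forward of its x-marginal [mu]. *)

From Stdlib Require Import Reals List Lra Classical FunctionalExtensionality.
Open Scope R_scope.

Set Implicit Arguments.
Unset Strict Implicit.

Section Semantics.
Variables (L : signature) (M : structure L).

Lemma term_params_in_True (t : term L M) : term_params_in L M (fun _ => True) t.
Proof. induction t; simpl; auto. Qed.

Lemma params_in_True (phi : formula L M) : params_in (fun _ => True) phi.
Proof. induction phi; simpl; auto using term_params_in_True. Qed.

Lemma term_vars_in_mono (V V' : nat -> Prop) (t : term L M) :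
  (forall v, V v -> V' v) -> term_vars_in L M V t -> term_vars_in L M V' t.
Proof. induction t; simpl; eauto. Qed.

Lemma vars_in_mono (phi : formula L M) : forall V V' : nat -> Prop,
  (forall v, V v -> V' v) -> vars_in V phi -> vars_in V' phi.
Proof.
  induction phi; simpl; intros V V' HV Hphi;
    intuition eauto using term_vars_in_mono.
  eapply IHphi; [|exact Hphi]. intros w [->|Hw]; auto.
Qed.

Lemma vars_in_app_l (x y : list nat) (phi : formula L M) :
  vars_in (fun v => In v x) phi -> vars_in (fun v => In v (x ++ y)) phi.
Proof. apply vars_in_mono. intros v Hv. apply in_or_app. auto. Qed.

Lemma vars_in_app_r (x y : list nat) (phi : formula L M) :
  vars_in (fun v => In v y) phi -> vars_in (fun v => In v (x ++ y)) phi.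
Proof. apply vars_in_mono. intros v Hv. apply in_or_app. auto. Qed.

Lemma eval_agree (V : nat -> Prop) (s s' : nat -> M) (t : term L M) :
  (forall v, V v -> s v = s' v) -> term_vars_in L M V t -> eval L M s t = eval L M s' t.
Proof.
  induction t as [| |g args IH]; simpl; intros Hs Ht; auto.
  f_equal. apply functional_extensionality_dep. auto.
Qed.

Lemma sat_agree (phi : formula L M) : forall (V : nat -> Prop) (s s' : nat -> M),
  (forall v, V v -> s v = s' v) -> vars_in V phi -> (sat L M s phi <-> sat L M s' phi).
Proof.
  induction phi as [| |t u|r args|p IH|p IHp q IHq|p IHp q IHq|n p IH];
    simpl; intros V s s' Hs Hphi.
  - tauto.
  - tauto.
  - destruct Hphi as [Ht Hu]. rewrite (eval_agree Hs Ht), (eval_agree Hs Hu); tauto.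
  - replace (fun i => eval L M s (args i)) with (fun i => eval L M s' (args i));
      [tauto|].
    apply functional_extensionality_dep. intros i. symmetry. eauto using eval_agree.
  - rewrite (IH V s s' Hs Hphi); tauto.
  - destruct Hphi as [Hp Hq]. rewrite (IHp V s s' Hs Hp), (IHq V s s' Hs Hq); tauto.
  - destruct Hphi as [Hp Hq]. rewrite (IHp V s s' Hs Hp), (IHq V s s' Hs Hq); tauto.
  - assert (Hupd : forall a v, v = n \/ V v -> upd L M s n a v = upd L M s' n a v).
    { intros a v Hv. unfold upd. destruct (Nat.eqb_spec v n); [reflexivity|].
      destruct Hv; [congruence|auto]. }
    split; intros [a Ha]; exists a; eapply (IH _ _ _ (Hupd a) Hphi); auto.
Qed.

Lemma sat_eqs (s : nat -> M) (y : list nat) : sat L M s (eqs y).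
Proof. induction y; simpl; auto. Qed.

Lemma vars_in_eqs (V : nat -> Prop) (y : list nat) :
  (forall v, In v y -> V v) -> vars_in V (@eqs L M y).
Proof. induction y; simpl; auto. Qed.

Lemma sat_exs (s : nat -> M) (y : list nat) (p : formula L M) :
  sat L M s (exs y p) <->
  exists s', (forall w, ~ In w y -> s' w = s w) /\ sat L M s' p.
Proof.
  revert s; induction y as [|v y IH]; intros s; simpl.
  - split; [intros H; exists s; auto|intros [s' [Hs' H]]].
    replace s with s'; auto. apply functional_extensionality. auto.
  - split.
    + intros [a Ha]. apply IH in Ha. destruct Ha as [s' [Hs' H]].
      exists s'; split; auto. intros w Hw. rewrite Hs' by tauto. unfold upd.
      destruct (Nat.eqb_spec w v); subst; tauto.
    + intros [s' [Hs' H]]. exists (s' v). apply IH. exists s'; split; auto.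
      intros w Hw. unfold upd. destruct (Nat.eqb_spec w v); subst; auto.
      apply Hs'. intros [E|E]; [congruence|tauto].
Qed.

Lemma vars_in_exs (V : nat -> Prop) (y : list nat) (p : formula L M) :
  vars_in (fun w => In w y \/ V w) p -> vars_in V (exs y p).
Proof.
  revert V; induction y as [|v y IH]; intros V H; simpl in *.
  - eapply vars_in_mono; [|exact H]. intros w [[]|]; auto.
  - apply IH. eapply vars_in_mono; [|exact H]. intros w [[E|E]|E]; auto.
Qed.

Lemma exists_assignment (s : nat -> M) (y : list nat) : NoDup y ->
  forall l, length l = length y ->
  exists s', (forall w, ~ In w y -> s' w = s w) /\ map s' y = l.
Proof.
  induction 1 as [|v y Hv Hnd IH]; intros l Hl.
  - destruct l; [|discriminate]. exists s; auto.
  - destruct l as [|a l]; [discriminate|]. injection Hl as Hl.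
    destruct (IH l Hl) as [s' [Hs' Hmap]].
    exists (upd L M s' v a). split.
    + intros w Hw. unfold upd. destruct (Nat.eqb_spec w v); subst.
      * simpl in Hw; tauto.
      * apply Hs'. simpl in Hw; tauto.
    + simpl. unfold upd at 1. rewrite Nat.eqb_refl. f_equal.
      rewrite <- Hmap. apply map_ext_in. intros w Hw. unfold upd.
      destruct (Nat.eqb_spec w v); subst; tauto.
Qed.

Lemma inL_allU (V : list nat) (phi : formula L M) :
  vars_in (fun v => In v V) phi -> inL V allU phi.
Proof. split; [assumption|apply params_in_True]. Qed.

Lemma inL_Top (V : list nat) (B : M -> Prop) : inL V B Top.
Proof. split; exact I. Qed.

Lemma inL_Not (V : list nat) (B : M -> Prop) (phi : formula L M) :
  inL V B phi -> inL V B (Not phi).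
Proof. auto. Qed.

Lemma inL_And (V : list nat) (B : M -> Prop) (phi psi : formula L M) :
  inL V B phi -> inL V B psi -> inL V B (And phi psi).
Proof. intros [] []. split; split; auto. Qed.

Lemma inL_Or (V : list nat) (B : M -> Prop) (phi psi : formula L M) :
  inL V B phi -> inL V B psi -> inL V B (Or phi psi).
Proof. intros [] []. split; split; auto. Qed.

End Semantics.

Section KeislerMeasure.
Variables (L : signature) (M : structure L).
Variables (V : list nat) (B : M -> Prop) (omega : formula L M -> R).
Hypothesis Homega : keisler V B omega.

Lemma keisler_Not (th : formula L M) : inL V B th -> omega (Not th) = 1 - omega th.
Proof.
  destruct Homega as [Hequiv [_ [Htop Hadd]]]. intros Hth.
  assert (Hem : omega (Or th (Not th)) = omega Top).
  { apply Hequiv; auto using inL_Or, inL_Not, inL_Top.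
    intros s. simpl. pose proof (classic (sat L M s th)). tauto. }
  rewrite Hadd in Hem by (auto using inL_Not; simpl; tauto). lra.
Qed.

Lemma keisler_split (phi th : formula L M) : inL V B phi -> inL V B th ->
  omega phi = omega (And phi th) + omega (And phi (Not th)).
Proof.
  destruct Homega as [Hequiv [_ [_ Hadd]]]. intros Hphi Hth.
  rewrite <- Hadd by (auto using inL_And, inL_Not; simpl; tauto).
  apply Hequiv; auto using inL_Or, inL_And, inL_Not.
  intros s. simpl. pose proof (classic (sat L M s th)). tauto.
Qed.

Lemma keisler_And_full (th phi : formula L M) :
  inL V B th -> omega th = 1 -> inL V B phi -> omega phi = omega (And phi th).
Proof.
  destruct Homega as [Hequiv [Hnn _]]. intros Hth Hth1 Hphi.
  assert (Hnull : omega (And phi (Not th)) = omega (And (Not th) phi)).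
  { apply Hequiv; auto using inL_And, inL_Not. intros s. simpl. tauto. }
  pose proof (keisler_split Hphi Hth) as Hphi_split.
  pose proof (keisler_split (inL_Not Hth) Hphi) as Hnot_split.
  rewrite keisler_Not in Hnot_split by assumption.
  pose proof (Hnn _ (inL_And (inL_Not Hth) Hphi)).
  pose proof (Hnn _ (inL_And (inL_Not Hth) (inL_Not Hphi))).
  lra.
Qed.

End KeislerMeasure.

Section DefinableFunction.
Variables (L : signature) (U : structure L) (A : U -> Prop) (x y : list nat).
Variables (f : list U -> list U) (theta : formula L U).
Hypothesis Hy : NoDup y.
Hypothesis Hxy : forall v, In v x -> ~ In v y.
Hypothesis Hf : defines_fun x y A f theta.

Lemma theta_vars : vars_in (fun v => In v (x ++ y)) theta.
Proof. apply Hf. Qed.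

Lemma exists_theta_extension (s : nat -> U) :
  exists s', (forall w, ~ In w y -> s' w = s w) /\ sat L U s' theta.
Proof.
  destruct Hf as [_ [Hlen Hgraph]].
  assert (Hl : length (f (map s x)) = length y) by (apply Hlen, length_map).
  destruct (exists_assignment s Hy Hl) as [s' [Hs' Hmap]].
  exists s'; split; auto. apply Hgraph. rewrite Hmap. f_equal.
  apply map_ext_in. intros v Hv. symmetry. auto.
Qed.

Lemma theta_functional (s1 s2 : nat -> U) :
  sat L U s1 theta -> sat L U s2 theta -> (forall v, In v x -> s1 v = s2 v) ->
  forall v, In v (x ++ y) -> s1 v = s2 v.
Proof.
  destruct Hf as [_ [_ Hgraph]]. intros H1 H2 Hx12 v Hv.
  apply in_app_or in Hv. destruct Hv as [Hv|Hv]; auto.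
  apply Hgraph in H1, H2.
  assert (map s1 x = map s2 x) by (apply map_ext_in; auto).
  apply (ext_in_map (f := s1) (g := s2) (l := y)); congruence.
Qed.

Lemma exists_graph_point (s : nat -> U) :
  exists s', (forall v, In v x -> s' v = s v) /\ sat L U s' theta /\
    forall chi, vars_in (fun v => In v (x ++ y)) chi ->
      (sat L U s (exs y (And theta chi)) <-> sat L U s' chi).
Proof.
  destruct (exists_theta_extension s) as [s' [Hs' Hth']].
  exists s'. split; [auto|split; [assumption|]].
  intros chi Hchi. rewrite sat_exs. split.
  - intros [s1 [Hs1 [Hth1 Hsat1]]].
    apply (sat_agree (V := fun v => In v (x ++ y)) (s := s1)); auto.
    apply theta_functional; auto.
    intros v Hv. rewrite Hs', Hs1; auto.
  - intros Hsat. exists s'. simpl. auto.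
Qed.

Lemma sat_exs_theta (s : nat -> U) (chi : formula L U) :
  sat L U s theta -> vars_in (fun v => In v (x ++ y)) chi ->
  (sat L U s (exs y (And theta chi)) <-> sat L U s chi).
Proof.
  intros Hth Hchi.
  destruct (exists_graph_point s) as [s' [Hs' [Hth' Hsat]]].
  rewrite Hsat by assumption.
  apply (sat_agree (V := fun v => In v (x ++ y))); auto.
  apply theta_functional; auto.
Qed.

Lemma vars_in_exs_theta (chi : formula L U) :
  vars_in (fun v => In v (x ++ y)) chi ->
  vars_in (fun v => In v x) (exs y (And theta chi)).
Proof.
  intros Hchi. apply vars_in_exs.
  assert (Hsplit : forall v, In v (x ++ y) -> In v y \/ In v x)
    by (intros v Hv; apply in_app_or in Hv; tauto).
  split; [apply (vars_in_mono Hsplit theta_vars)|apply (vars_in_mono Hsplit Hchi)].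
Qed.

Lemma exs_theta_disjoint (chi chi' : formula L U) :
  vars_in (fun v => In v (x ++ y)) chi -> vars_in (fun v => In v (x ++ y)) chi' ->
  (forall s, ~ (sat L U s chi /\ sat L U s chi')) ->
  forall s, ~ (sat L U s (exs y (And theta chi)) /\ sat L U s (exs y (And theta chi'))).
Proof.
  intros Hchi Hchi' Hdisj s.
  destruct (exists_graph_point s) as [s' [_ [_ Hsat]]].
  rewrite !Hsat by assumption. apply Hdisj.
Qed.

Lemma pi_y_eq_pushforward (omega : formula L U -> R) :
  keisler (x ++ y) allU omega -> omega theta = 1 ->
  forall psi, vars_in (fun v => In v y) psi ->
    pi_x L U x omega psi = pushforward y theta (pi_x L U y omega) psi.
Proof.
  intros Homega Hth1 psi Hpsi. unfold pi_x, pushforward.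
  pose proof (vars_in_app_r x Hpsi) as Hpsi'.
  assert (Hth : inL (x ++ y) allU theta) by apply (inL_allU theta_vars).
  assert (Heqs : forall z, incl z (x ++ y) -> inL (x ++ y) allU (@eqs L U z))
    by (intros; apply inL_allU, vars_in_eqs; auto).
  assert (Hpsi_x : inL (x ++ y) allU (And psi (eqs x)))
    by (apply inL_And; [apply inL_allU|apply Heqs, incl_appl, incl_refl]; auto).
  assert (Hchi_y : inL (x ++ y) allU (And (exs y (And theta psi)) (eqs y))).
  { apply inL_And; [|apply Heqs, incl_appr, incl_refl].
    apply inL_allU, vars_in_app_l, vars_in_exs_theta; auto. }
  rewrite (keisler_And_full Homega Hth Hth1 Hpsi_x),
          (keisler_And_full Homega Hth Hth1 Hchi_y).
  apply Homega; auto using inL_And.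
  intros s. simpl. pose proof (sat_eqs s x). pose proof (sat_eqs s y).
  split; intros [[Hsat Heq] Hth_s]; pose proof (sat_exs_theta Hth_s Hpsi'); tauto.
Qed.

Variable mu : formula L U -> R.
Hypothesis Hmu : keisler x allU mu.

Lemma pushforward_graph_eq (chi phi : formula L U) :
  vars_in (fun v => In v (x ++ y)) chi -> vars_in (fun v => In v x) phi ->
  (forall s, sat L U s theta -> (sat L U s chi <-> sat L U s phi)) ->
  pushforward y theta mu chi = mu phi.
Proof.
  intros Hchi Hphi Hgraph. apply Hmu; auto using inL_allU, vars_in_exs_theta.
  intros s. destruct (exists_graph_point s) as [s' [Hs' [Hth' Hsat]]].
  rewrite Hsat, Hgraph by assumption.
  apply (sat_agree (V := fun v => In v x)); auto.
Qed.

Lemma keisler_pushforward (B : U -> Prop) : keisler (x ++ y) B (pushforward y theta mu).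
Proof.
  destruct Hmu as [_ [Hnn [Htop Hadd]]].
  split; [|split; [|split]].
  - intros chi chi' [Hchi _] [Hchi' _] Hequ.
    apply pushforward_graph_eq; auto using vars_in_exs_theta.
    intros s Hth. rewrite sat_exs_theta; auto.
  - intros chi [Hchi _]. apply Hnn, inL_allU, vars_in_exs_theta, Hchi.
  - rewrite <- Htop. apply pushforward_graph_eq; simpl; tauto.
  - intros chi chi' [Hchi _] [Hchi' _] Hdisj.
    unfold pushforward at 2 3.
    rewrite <- Hadd by auto using inL_allU, vars_in_exs_theta, exs_theta_disjoint.
    apply pushforward_graph_eq; simpl; auto using vars_in_exs_theta.
    intros s Hth. rewrite !sat_exs_theta by assumption. tauto.
Qed.

Lemma pi_x_pushforward (phi : formula L U) :
  vars_in (fun v => In v x) phi -> pi_x L U y (pushforward y theta mu) phi = mu phi.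
Proof.
  intros Hphi. apply pushforward_graph_eq; auto.
  - split; [apply vars_in_app_l; auto|].
    apply vars_in_eqs. intros v Hv. apply in_or_app. auto.
  - intros s _. simpl. pose proof (sat_eqs s y). tauto.
Qed.

Lemma pushforward_theta : pushforward y theta mu theta = 1.
Proof.
  destruct Hmu as [_ [_ [Htop _]]]. rewrite <- Htop.
  apply pushforward_graph_eq; simpl; auto using theta_vars.
  tauto.
Qed.

End DefinableFunction.

Theorem proposition3p10 (L : signature) (U : structure L)
  (A : U -> Prop) (x y : list nat)
  (Hx : NoDup x) (Hy : NoDup y) (Hxy : forall v, In v x -> ~ In v y)
  (mu : formula L U -> R) (Hmu : keisler x allU mu)
  (f : list U -> list U) (theta : formula L U)
  (Hf : defines_fun x y A f theta) :
  geE x y A mu (pushforward y theta mu).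
Proof.
  exists (pushforward y theta mu). split; [|split].
  - exact (keisler_pushforward Hy Hxy Hf Hmu A).
  - intros phi [Hphi _]. exact (pi_x_pushforward Hy Hxy Hf Hmu Hphi).
  - intros omega Homega Hext Hpi psi [Hpsi _].
    assert (Hth1 : omega theta = 1).
    { rewrite Hext by apply Hf. exact (pushforward_theta Hy Hxy Hf Hmu). }
    rewrite (pi_y_eq_pushforward Hy Hxy Hf Homega Hth1 Hpsi).
    apply Hpi, inL_allU, (vars_in_exs_theta Hf), vars_in_app_r, Hpsi.
Qed.
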